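(* Let $(F,v)$ be a valued field, $(V,q)$ a quadratic space over $F$, and $\alpha$ a $v$-norm on $V$ which is compatible of depth $\varepsilon$ with $q$, where $0\le\varepsilon<v(2)$. Then there are $2$-dimensional subspaces $V_1,\dots,V_n$ of $V$ such that, with $q_i=q|_{V_i}$ and $\alpha_i=\alpha|_{V_i}$: (1) $(V,q)=(V_1,q_1)\perp\dots\perp(V_n,q_n)$ (orthogonal sum with respect to the polar form $b_q$); (2) each $\alpha_i$ is a $v$-norm on $V_i$ which is $\varepsilon$-compatible with $q_i$, and $\alpha=\alpha_1\oplus\dots\oplus\alpha_n$, i.e. $\alpha(x_1+\dots+x_n)=\min_i\alpha(x_i)$ for $x_i\in V_i$.
   Context: $F$ is a field with valuation $v\colon F\to\Gamma\cup\{\infty\}$, $\Gamma$ divisible totally ordered abelian group; $v(2)=\infty$ iff $\operatorname{char}F=2$. A $v$-norm on a finite-dimensional $F$-space $V$ is $\alpha\colon V\to\Gamma\cup\{\infty\}$ with $\alpha(x)=\infty\iff x=0$, $\alpha(\lambda x)=v(\lambda)+\alpha(x)$, $\alpha(x+y)\ge\min(\alpha(x),\alpha(y))$, admitting a basis $(e_i)$ with $\alpha(\sum\lambda_ie_i)=\min\alpha(\lambda_ie_i)$. For $\varepsilon\in\Gamma$, $\varepsilon\ge0$, $\alpha$ is $\varepsilon$-compatible (compatible of depth $\varepsilon$) with $q$, whose polar form is $b_q(x,y)=q(x+y)-q(x)-q(y)$, if (a) $v(b_q(x,y))\ge\alpha(x)+\alpha(y)+\varepsilon$ for all $x,y$;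 (b) $v(q(x))\ge2\alpha(x)$ for all $x$; (c) for every $x\ne0$ there is $y\ne0$ with $v(b_q(x,y))=\alpha(x)+\alpha(y)+\varepsilon$. *)

From HB Require Import structures.
From mathcomp Require Import all_boot all_order all_algebra.
Set Implicit Arguments. Unset Strict Implicit. Unset Printing Implicit Defensive.
Import Order.TTheory GRing.Theory.
Local Open Scope ring_scope.

Definition divisible_ordered_group (G : zmodType) (le : rel G) : Prop :=
  (forall x, le x x) /\
  (forall x y, le x y -> le y x -> x = y) /\
  (forall x y z, le x y -> le y z -> le x z) /\
  (forall x y, le x y \/ le y x) /\
  (forall x y z, le x y -> le (x + z) (y + z)) /\
  (forall (x : G) (n : nat), (0 < n)%N -> exists y : G, y *+ n = x).

(** [option G] models [G ∪ {∞}], with [None] = ∞. *)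
Definition oadd (G : zmodType) (a b : option G) : option G :=
  match a, b with Some x, Some y => Some (x + y) | _, _ => None end.

Definition ole (G : zmodType) (le : rel G) (a b : option G) : Prop :=
  match a, b with
  | _, None => True
  | None, Some _ => False
  | Some x, Some y => le x y
  end.

Definition olt (G : zmodType) (le : rel G) (a b : option G) : Prop :=
  ole le a b /\ a <> b.

Definition omin (G : zmodType) (le : rel G) (a b : option G) : option G :=
  match a, b with
  | None, _ => b
  | _, None => a
  | Some x, Some y => if le x y then Some x else Some y
  end.

Definition ominI (G : zmodType) (le : rel G) (n : nat) (f : 'I_n -> option G)
  : option G := foldr (omin le) None [seq f i | i <- enum 'I_n].

Definition valuation (F : fieldType) (G : zmodType) (le : rel G)
  (v : F -> option G) : Prop :=
  [/\ (forall x, v x = None <-> x = 0),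
      (forall x y, v (x * y) = oadd (v x) (v y)) &
      (forall x y, ole le (omin le (v x) (v y)) (v (x + y)))].

Definition polar (F : fieldType) (V : vectType F) (q : V -> F) (x y : V) : F :=
  q (x + y) - q x - q y.

Definition quadratic_form (F : fieldType) (V : vectType F) (q : V -> F) : Prop :=
  (forall (a : F) (x : V), q (a *: x) = a ^+ 2 * q x) /\
  (forall (a : F) (x y z : V),
      polar q (a *: x + y) z = a * polar q x z + polar q y z).

Definition vnorm_on (F : fieldType) (G : zmodType) (le : rel G)
  (v : F -> option G) (V : vectType F) (U : {vspace V}) (alpha : V -> option G)
  : Prop :=
  [/\ (forall x, x \in U -> (alpha x = None <-> x = 0)),
      (forall (l : F) x, x \in U -> alpha (l *: x) = oadd (v l) (alpha x)),
      (forall x y, x \in U -> y \in U ->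
          ole le (omin le (alpha x) (alpha y)) (alpha (x + y))) &
      (exists e : (\dim U).-tuple V, basis_of U e /\
          forall l : 'I_(\dim U) -> F,
            alpha (\sum_(i < \dim U) l i *: e`_i)
            = ominI le (fun i => alpha (l i *: e`_i)))].

Definition compatible_on (F : fieldType) (G : zmodType) (le : rel G)
  (v : F -> option G) (V : vectType F) (U : {vspace V}) (q : V -> F)
  (alpha : V -> option G) (eps : G) : Prop :=
  [/\ (forall x y, x \in U -> y \in U ->
         ole le (oadd (oadd (alpha x) (alpha y)) (Some eps)) (v (polar q x y))),
      (forall x, x \in U -> ole le (oadd (alpha x) (alpha x)) (v (q x))) &
      (forall x, x \in U -> x != 0 -> exists2 y, y \in U &
         y != 0 /\ v (polar q x y) = oadd (oadd (alpha x) (alpha y)) (Some eps))].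

From HB Require Import structures.
From mathcomp Require Import all_boot all_order all_algebra ring.
Import GRing.Theory.
Local Open Scope ring_scope.

(* Take x != 0 and a partner y with v (b_q x y) = alpha x + alpha y + eps.  After
   subtracting its component along x, y is alpha-orthogonal to x, and x, y extend to an
   alpha-orthogonal basis x, y, t.  Because eps < v 2, the Gram determinant of b_q on
   W = span(x, y) has valuation exactly 2 v (b_q x y), so by Cramer's rule the
   b_q-orthogonal projection of any z onto W has norm at least alpha z.  Hence
   V = W + W^perp is an alpha-orthogonal sum, the projection onto W^perp is isometric
   on span t (so W^perp inherits an alpha-orthogonal basis), and projecting partners
   into W^perp shows that W^perp again satisfies the compatibility condition (c). *)

Definition gram {F : fieldType} {V : vectType F} (q : V -> F) (x y : V) : F :=
  polar q x x * polar q y y - polar q x y ^+ 2.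

(* Cramer's rule for the coordinates of the b_q-orthogonal projection of z onto
   span(x, y); [orth_proj q x y z] is the component of z in the complement. *)
Definition proj_coefl {F : fieldType} {V : vectType F} (q : V -> F) (x y z : V) : F :=
  (polar q y y * polar q z x - polar q x y * polar q z y) / gram q x y.
Definition proj_coefr {F : fieldType} {V : vectType F} (q : V -> F) (x y z : V) : F :=
  (polar q x x * polar q z y - polar q x y * polar q z x) / gram q x y.

Definition orth_proj {F : fieldType} {V : vectType F} (q : V -> F) (x y z : V) : V :=
  z - (proj_coefl q x y z *: x + proj_coefr q x y z *: y).

Section PolarForm.
Context {F : fieldType} {V : vectType F} {q : V -> F} (hq : quadratic_form q).

Lemma polarC x y : polar q x y = polar q y x.
Proof. by rewrite /polar [y + x]addrC addrAC. Qed.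

Lemma polarDl x y z : polar q (x + y) z = polar q x z + polar q y z.
Proof. by have := hq.2 1 x y z; rewrite scale1r mul1r. Qed.

Lemma polar0l z : polar q 0 z = 0.
Proof. by apply: (@addrI _ (polar q 0 z)); rewrite addr0 -polarDl addr0. Qed.

Lemma polarZl a x z : polar q (a *: x) z = a * polar q x z.
Proof. by have := hq.2 a x 0 z; rewrite !addr0 polar0l addr0. Qed.

Lemma polarBl x y z : polar q (x - y) z = polar q x z - polar q y z.
Proof. by rewrite polarDl -scaleN1r polarZl mulN1r. Qed.

Lemma polarDr x y z : polar q z (x + y) = polar q z x + polar q z y.
Proof. by rewrite !(polarC z) polarDl. Qed.

Lemma polarZr a x z : polar q z (a *: x) = a * polar q z x.
Proof. by rewrite !(polarC z) polarZl. Qed.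

Lemma polarBr x y z : polar q z (x - y) = polar q z x - polar q z y.
Proof. by rewrite !(polarC z) polarBl. Qed.

Lemma polarxx x : polar q x x = 2 * q x.
Proof. by rewrite /polar -mulr2n -scaler_nat hq.1; ring. Qed.

Lemma orth_proj_orthl x y z : gram q x y != 0 -> polar q (orth_proj q x y z) x = 0.
Proof.
move=> hD; rewrite /orth_proj /proj_coefl /proj_coefr polarBl polarDl !polarZl (polarC y x).
by apply/eqP; rewrite subr_eq0; apply/eqP; move: hD; rewrite /gram => hD; field.
Qed.

Lemma orth_proj_orthr x y z : gram q x y != 0 -> polar q (orth_proj q x y z) y = 0.
Proof.
move=> hD; rewrite /orth_proj /proj_coefl /proj_coefr polarBl polarDl !polarZl.
by apply/eqP; rewrite subr_eq0; apply/eqP; move: hD; rewrite /gram => hD; field.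
Qed.

Lemma orth_proj_linear x y : linear (orth_proj q x y).
Proof.
move=> k u w; have coefE c : c = proj_coefl q x y \/ c = proj_coefr q x y ->
  c (k *: u + w) = k * c u + c w.
  by case=> ->; rewrite /proj_coefl /proj_coefr !polarDl !polarZl; ring.
rewrite /orth_proj !coefE; [|by right|by left].
set a1 := proj_coefl q x y u; set a2 := proj_coefl q x y w.
set b1 := proj_coefr q x y u; set b2 := proj_coefr q x y w.
by rewrite scalerBr scalerDr !scalerA !scalerDl [X in _ - X]addrACA opprD addrACA.
Qed.
End PolarForm.

Section Spans.
Context {F : fieldType} {V : vectType F}.
Implicit Types (x : V) (s : seq V).

Lemma memv_lineZ k x : k *: x \in <[x]>%VS.
Proof. exact/memvZ/memv_line. Qed.

Lemma memv_span_head x s : x \in <<x :: s>>%VS.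
Proof. by apply: memv_span; rewrite mem_head. Qed.

Lemma subv_span_cons x s : (<<s>> <= <<x :: s>>)%VS.
Proof. by rewrite span_cons addvSr. Qed.

Lemma memv_span_cons x s k w : w \in <<s>>%VS -> k *: x + w \in <<x :: s>>%VS.
Proof. by move=> hw; rewrite span_cons memv_add ?memv_lineZ. Qed.

Lemma memv_span_consP x s u :
  u \in <<x :: s>>%VS -> exists k, exists2 w, w \in <<s>>%VS & u = k *: x + w.
Proof. by rewrite span_cons => /memv_addP [a /vlineP [k ->] [w hw ->]]; exists k, w. Qed.

Lemma span_cons_subvE x s U :
  (<<x :: s>> <= U)%VS = (x \in U) && (<<s>> <= U)%VS.
Proof. by rewrite span_cons subv_add memvE. Qed.

Lemma span_cons_exchange {x y s k z} :
  k != 0 -> z \in <<s>>%VS -> y = k *: x + z -> <<y :: s>>%VS = <<x :: s>>%VS.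
Proof.
move=> k0 hz ->; apply/eqP; rewrite eqEsubv !span_cons_subvE !subv_span_cons !andbT.
rewrite memv_span_cons //=; have {1}-> : x = k^-1 *: (k *: x + z) + - (k^-1 *: z).
  by rewrite scalerDr scalerA mulVf // scale1r addrK.
by rewrite memv_span_cons // memvN memvZ.
Qed.

Definition pair_span (p : V * V) := <<[:: p.1; p.2]>>%VS.

Lemma pair_spanP x y u :
  u \in pair_span (x, y) -> exists k1 k2, u = k1 *: x + k2 *: y.
Proof.
case/memv_span_consP=> k1 [w /memv_span_consP [k2 [w0]]].
by rewrite span_nil memv0 => /eqP -> -> ->; exists k1, k2; rewrite addr0.
Qed.

Lemma memv_pair_span x y k1 k2 : k1 *: x + k2 *: y \in pair_span (x, y).
Proof. by rewrite memv_span_cons // -[_ *: y]addr0 memv_span_cons ?mem0v. Qed.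

Lemma memv_pair_spanl x y : x \in pair_span (x, y).
Proof. exact: memv_span_head. Qed.

Lemma memv_pair_spanr x y : y \in pair_span (x, y).
Proof. by apply: memv_span; rewrite !inE eqxx orbT. Qed.

Definition span_pairs (ps : seq (V * V)) :=
  (\sum_(i < size ps) pair_span (nth (0%R, 0%R) ps i))%VS.

Lemma span_pairs_cons p ps : span_pairs (p :: ps) = (pair_span p + span_pairs ps)%VS.
Proof. by rewrite /span_pairs big_ord_recl. Qed.

Lemma pair_span_sub_pairs {ps i} :
  (i < size ps)%N -> (pair_span (nth (0%R, 0%R) ps i) <= span_pairs ps)%VS.
Proof. by move=> hi; apply: (sumv_sup (Ordinal hi)). Qed.

End Spans.

Lemma memv_span_mapP {F : fieldType} {U V : vectType F} (f : {linear U -> V}) s w :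
  reflect (exists2 u, u \in <<s>>%VS & w = f u) (w \in <<map f s>>%VS).
Proof.
rewrite -(eq_map (lfunE f)) -limg_span.
by apply: (iffP memv_imgP) => -[u hu ->]; exists u; rewrite ?lfunE.
Qed.

Lemma oaddC {G : zmodType} (a b : option G) : oadd a b = oadd b a.
Proof. by case: a => [x|]; case: b => [y|] //=; rewrite addrC. Qed.

Lemma oaddA {G : zmodType} (a b c : option G) : oadd a (oadd b c) = oadd (oadd a b) c.
Proof. by case: a => [x|]; case: b => [y|]; case: c => [z|] //=; rewrite addrA. Qed.

Lemma oadd0l {G : zmodType} (a : option G) : oadd (Some 0) a = a.
Proof. by case: a => //= x; rewrite add0r. Qed.

HB.instance Definition _ (G : zmodType) :=
  Monoid.isComLaw.Build (option G) (Some 0) (@oadd G) oaddA oaddC oadd0l.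

Lemma oadd_neqN {G : zmodType} {a b : option G} :
  a <> None -> b <> None -> oadd a b <> None.
Proof. by case: a => [x|]; case: b => [y|]. Qed.

Section ValuedSpaces.
Context {G : zmodType} {le : rel G} (hG : divisible_ordered_group le).

Local Notation "a <=o b" := (ole le a b) (at level 70, no associativity).
Local Notation "a <o b" := (~ ole le b a) (at level 70, no associativity).
Local Notation "a +o b" := (oadd a b) (at level 50, left associativity).

Lemma gle_refl x : le x x.
Proof. by case: hG. Qed.

Lemma gle_anti {x y} : le x y -> le y x -> x = y.
Proof. by case: hG => _ [h _]; apply: h. Qed.

Lemma gle_trans {x y z} : le x y -> le y z -> le x z.
Proof. by case: hG => _ [_ [h _]]; apply: h. Qed.

Lemma gle_total x y : le x y \/ le y x.
Proof. by case: hG => _ [_ [_ [h _]]]; apply: h. Qed.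

Lemma gle_add2r z x y : le (x + z) (y + z) = le x y.
Proof.
have addr z' x' y' : le x' y' -> le (x' + z') (y' + z').
  by case: hG => _ [_ [_ [_ [h _]]]]; apply: h.
by apply/idP/idP => [/(addr (- z))|/addr//]; rewrite !addrK.
Qed.

Lemma gle_add {x y z t} : le x y -> le z t -> le (x + z) (y + t).
Proof.
move=> hxy hzt; apply: (@gle_trans _ (y + z)); first by rewrite gle_add2r.
by rewrite ![y + _]addrC gle_add2r.
Qed.

Lemma ole_refl a : a <=o a.
Proof. by case: a => //= x; apply: gle_refl. Qed.

Lemma ole_trans {a b c} : a <=o b -> b <=o c -> a <=o c.
Proof. by case: a => [x|]; case: b => [y|]; case: c => [z|] //=; apply: gle_trans. Qed.

Lemma ole_anti {a b} : a <=o b -> b <=o a -> a = b.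
Proof. by case: a => [x|]; case: b => [y|] //= h1 h2; rewrite (gle_anti h1 h2). Qed.

Lemma ole_dec a b : a <=o b \/ b <o a.
Proof. by case: a => [x|]; case: b => [y|] //=; auto; case: (le x y); auto. Qed.

Lemma olt_le {a b} : a <o b -> a <=o b.
Proof.
by case: a => [x|]; case: b => [y|] //= h; case: (gle_total x y) => // /h.
Qed.

Lemma olt_le_trans {a b c} : a <o b -> b <=o c -> a <o c.
Proof. by move=> hab hbc hca; apply/hab/(ole_trans hbc). Qed.

Lemma olt_neqN {a b} : a <o b -> a <> None.
Proof. by move=> h ha; apply: h; rewrite ha; case: b. Qed.

Lemma ole_oadd {a b c d} : a <=o b -> c <=o d -> a +o c <=o b +o d.
Proof.
by case: a => [x|]; case: b => [y|]; case: c => [z|]; case: d => [w|] //=; apply: gle_add.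
Qed.

Lemma ole_oaddr {c a b} : a <=o b -> a +o c <=o b +o c.
Proof. by move/ole_oadd; apply; apply: ole_refl. Qed.

Lemma ole_oaddl {c a b} : a <=o b -> c +o a <=o c +o b.
Proof. exact/ole_oadd/ole_refl. Qed.

Lemma ole_oadd2r {c a b} : c <> None -> (a +o c <=o b +o c) <-> (a <=o b).
Proof.
case: c => [z|] // _; split; last exact: ole_oaddr.
by case: a => [x|]; case: b => [y|] //=; rewrite gle_add2r.
Qed.

Lemma ole_oadd2l {c a b} : c <> None -> (c +o a <=o c +o b) <-> (a <=o b).
Proof. by rewrite !(oaddC c); apply: ole_oadd2r. Qed.

Lemma olt_oadd_le {a b c d} : a <o b -> c <=o d -> c <> None -> a +o c <o b +o d.
Proof.
move=> hab hcd hc; apply: (@olt_le_trans _ (b +o c)); last exact: ole_oaddl.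
by move/(ole_oadd2r hc)/hab.
Qed.

Lemma ole_minl a b : omin le a b <=o a.
Proof.
case: a => [x|]; case: b => [y|] //=; last exact: gle_refl.
case E: (le x y) => /=; first exact: gle_refl.
by case: (gle_total x y); rewrite ?E.
Qed.

Lemma ole_minr a b : omin le a b <=o b.
Proof.
case: a => [x|]; case: b => [y|] //=; last exact: gle_refl.
by case E: (le x y) => //=; apply: gle_refl.
Qed.

Lemma ole_min {m a b} : m <=o a -> m <=o b -> m <=o omin le a b.
Proof. by case: a => [x|]; case: b => [y|] //=; case: (le x y). Qed.

Lemma omin_l {a b} : a <=o b -> omin le a b = a.
Proof. by move=> h; apply: ole_anti (ole_minl _ _) (ole_min (ole_refl _) h). Qed.

Lemma omin_r {a b} : b <=o a -> omin le a b = b.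
Proof. by move=> h; apply: ole_anti (ole_minr _ _) (ole_min h (ole_refl _)). Qed.

Lemma omin_cases a b : omin le a b = a \/ omin le a b = b.
Proof. by case: (ole_dec a b) => [/omin_l|/olt_le/omin_r]; auto. Qed.

Lemma ole_oadd_min {c a b m} :
  m <=o c +o a -> m <=o c +o b -> m <=o c +o omin le a b.
Proof. by case: (omin_cases a b) => ->. Qed.

Lemma ominI_le n (f : 'I_n -> option G) i : ominI le f <=o f i.
Proof.
rewrite /ominI; elim: (enum _) (mem_enum predT i) => //= j s IH.
rewrite inE => /orP[/eqP<-|/IH]; first exact: ole_minl.
exact/ole_trans/ole_minr.
Qed.

Lemma ominI_ge n (f : 'I_n -> option G) m :
  (forall i, m <=o f i) -> m <=o ominI le f.
Proof.
by move=> h; rewrite /ominI; elim: (enum _) => [|i s IH] /=; [case: (m)|apply: ole_min].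
Qed.

Definition ultrametric {X : zmodType} (N : X -> option G) :=
  forall x y, omin le (N x) (N y) <=o N (x + y).

Section Ultrametric.
Context {X : zmodType} {N : X -> option G} (hN : ultrametric N).

Lemma ultraD_ge {m x y} : m <=o N x -> m <=o N y -> m <=o N (x + y).
Proof. by move=> hx hy; apply: ole_trans (hN x y); apply: ole_min. Qed.

Lemma ultra_sum_ge (N0 : N 0 = None) {I : Type} (r : seq I) (P : pred I)
  (f : I -> X) m :
  (forall i, P i -> m <=o N (f i)) -> m <=o N (\sum_(i <- r | P i) f i).
Proof.
move=> h; apply: (big_ind (fun x => m <=o N x)) => //; first by rewrite N0; case: (m).
by move=> x y; apply: ultraD_ge.
Qed.

Lemma ultraD_eq (NN : forall x, N (- x) = N x) {x y} :
  N x <o N y -> N (x + y) = N x.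
Proof.
move=> hlt; apply: ole_anti; last by apply: ultraD_ge (ole_refl _) (olt_le hlt).
have := hN (x + y) (- y); rewrite addrK NN.
case: (ole_dec (N (x + y)) (N y)) => [/omin_l -> //|/olt_le/omin_r ->].
by move=> /hlt.
Qed.

End Ultrametric.

Section Valuation.
Context {F : fieldType} {v : F -> option G} (hv : valuation le v).

Lemma val_eq0 x : v x = None <-> x = 0.
Proof. by case: hv. Qed.

Lemma valM x y : v (x * y) = v x +o v y.
Proof. by case: hv. Qed.

Lemma val_ultra : ultrametric v.
Proof. by case: hv. Qed.

Lemma val_neqN {x} : x != 0 -> v x <> None.
Proof. by move=> /eqP hx /val_eq0. Qed.

Lemma val1 : v 1 = Some 0.
Proof.
have := valM 1 1; rewrite mulr1.
case E: (v 1) => [g|] /=; last by move: E => /val_eq0 /eqP; rewrite oner_eq0.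
by case=> /(congr1 (fun t => t - g)); rewrite addrK subrr => ->.
Qed.

(* -1 has order 2 and the value group is torsion-free. *)
Lemma valN1 : v (-1) = Some 0.
Proof.
have := valM (-1) (-1); rewrite mulrNN mulr1 val1.
case E: (v (-1)) => [g|] //= [gg0]; congr Some.
have hg z : le z 0 -> le 0 z -> z = 0 by move=> *; apply: gle_anti.
by case: (gle_total g 0) => h; apply: hg => //;
   rewrite -(gle_add2r g) ?add0r gg0 in h *.
Qed.

Lemma valN x : v (- x) = v x.
Proof. by rewrite -mulN1r valM valN1 oadd0l. Qed.

Lemma valD_eq x y : v x <o v y -> v (x + y) = v x.
Proof. exact: (ultraD_eq val_ultra valN). Qed.

Section Norm.
Context {V : vectType F} {alpha : V -> option G} (halpha : vnorm_on le v fullv alpha).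

Lemma vnorm_eq0 x : alpha x = None <-> x = 0.
Proof. by case: halpha => h _ _ _; apply: h; rewrite memvf. Qed.

Lemma vnorm0 : alpha 0 = None.
Proof. exact/vnorm_eq0. Qed.

Lemma vnorm_neqN {x} : x != 0 -> alpha x <> None.
Proof. by move=> /eqP hx /vnorm_eq0. Qed.

Lemma vnormZ l x : alpha (l *: x) = v l +o alpha x.
Proof. by case: halpha => _ h _ _; apply: h; rewrite memvf. Qed.

Lemma vnorm_ultra : ultrametric alpha.
Proof. by case: halpha => _ _ h _ x y; apply: h; rewrite memvf. Qed.

Lemma vnormN x : alpha (- x) = alpha x.
Proof. by rewrite -scaleN1r vnormZ valN1 oadd0l. Qed.

Lemma vnormD_eq x y : alpha x <o alpha y -> alpha (x + y) = alpha x.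
Proof. exact: (ultraD_eq vnorm_ultra vnormN). Qed.

Lemma vnorm_sum_ominI n (x : 'I_n -> V) :
  (forall i, alpha (\sum_j x j) <=o alpha (x i)) ->
  alpha (\sum_j x j) = ominI le (fun i => alpha (x i)).
Proof.
move=> hx; apply: ole_anti; first exact: ominI_ge.
by apply: (ultra_sum_ge vnorm_ultra vnorm0) => i _; apply: ominI_le.
Qed.

(* Together with the ultrametric inequality, [aorth A B] means
   alpha (a + b) = min (alpha a) (alpha b) for a in A and b in B. *)
Definition aorth (A B : {vspace V}) :=
  forall a b, a \in A -> b \in B -> alpha (a + b) <=o alpha a.

Lemma aorth_ler {A B a b} : aorth A B -> a \in A -> b \in B ->
  alpha (a + b) <=o alpha b.
Proof.
move=> hAB ha hb; have eb : b = (a + b) + - a by rewrite addrC addKr.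
rewrite {2}eb.
by apply: (ultraD_ge vnorm_ultra (ole_refl _)); rewrite vnormN; apply: hAB.
Qed.

Lemma aorthS {A B A' B'} : (A' <= A)%VS -> (B' <= B)%VS -> aorth A B -> aorth A' B'.
Proof. by move=> /subvP hA /subvP hB hAB a b /hA ha /hB; apply: hAB. Qed.

Lemma aorth_eq {A B a b} : aorth A B -> a \in A -> b \in B ->
  alpha a <=o alpha b -> alpha (a + b) = alpha a.
Proof.
move=> hAB ha hb hab; apply: ole_anti (hAB _ _ ha hb) _.
exact: (ultraD_ge vnorm_ultra (ole_refl _) hab).
Qed.

Fixpoint aorth_seq (s : seq V) : Prop :=
  if s is x :: s' then [/\ x != 0, aorth <[x]> <<s'>> & aorth_seq s'] else True.

Lemma vnorm_splitting_basis : exists s : seq V, [/\ free s, <<s>>%VS = fullv &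
  forall (l : 'I_(size s) -> F) i,
    alpha (\sum_(j < size s) l j *: s`_j) <=o alpha (l i *: s`_i)].
Proof.
case: halpha => _ _ _ [e [hb hsplit]]; move: e hb hsplit.
move: (\dim _) => d [s hs] /andP [/eqP hspan hfree] hsplit; move/eqP: (hs) => hsd; subst d.
by exists s; split=> // l i; rewrite hsplit; apply: ominI_le.
Qed.

Lemma aorth_seq_splitting s : free s ->
  (forall (l : 'I_(size s) -> F) i,
    alpha (\sum_(j < size s) l j *: s`_j) <=o alpha (l i *: s`_i)) ->
  aorth_seq s.
Proof.
elim: s => [|a s IH] //=; rewrite free_cons => /andP [has hfs] hsplit.
pose ext (c : 'I_(size s) -> F) l (j : 'I_(size s).+1) :=
  if unlift ord0 j is Some i then c i else l.
have sum_ext c l : \sum_(j < (size s).+1) ext c l j *: (a :: s)`_j =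
                   l *: a + \sum_(j < size s) c j *: s`_j.
  rewrite big_ord_recl /ext unlift_none; congr (_ + _).
  by apply: eq_bigr => i _; rewrite liftK.
split.
- by apply: contraNneq has => ->; rewrite mem0v.
- move=> u w /vlineP [l ->] hw; rewrite (coord_span (X := in_tuple s) hw).
  have := hsplit (ext (coord (in_tuple s) ^~ w) l) ord0.
  by rewrite sum_ext /ext unlift_none.
- apply: IH => // l i; have := hsplit (ext l 0) (lift ord0 i).
  by rewrite sum_ext scale0r add0r /ext liftK.
Qed.

Lemma exists_aorth_basis : exists s, aorth_seq s /\ <<s>>%VS = fullv.
Proof.
have [s [hfree hspan hsplit]] := vnorm_splitting_basis.
by exists s; split=> //; apply: aorth_seq_splitting.
Qed.

Lemma aorth_seq_exchange_head {b r k z} : aorth_seq (b :: r) -> z \in <<r>>%VS ->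
  alpha (k *: b) <=o alpha z -> k *: b + z != 0 ->
  aorth_seq ((k *: b + z) :: r) /\ <<(k *: b + z)%R :: r>>%VS = <<b :: r>>%VS.
Proof.
move=> [hb0 hbr hr] hz hkz hy0; set y := k *: b + z in hy0 *.
have hay : alpha y = alpha (k *: b) by apply: aorth_eq hbr (memv_lineZ _ _) hz hkz.
have k0 : k != 0.
  by apply: contraNneq hy0 => k0; apply/eqP/vnorm_eq0; rewrite hay k0 scale0r vnorm0.
split; last exact: span_cons_exchange k0 hz _.
split=> // _ w /vlineP [l ->] hw.
rewrite vnormZ hay -vnormZ /y scalerDr -addrA.
by apply: hbr; [rewrite scalerA memv_lineZ | rewrite memvD ?memvZ].
Qed.

Lemma aorth_seq_exchange_tail {b r k z t} : aorth_seq (b :: r) ->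
  alpha z <o alpha (k *: b) -> aorth_seq (z :: t) -> <<z :: t>>%VS = <<r>>%VS ->
  aorth_seq ((k *: b + z) :: b :: t) /\ <<(k *: b + z)%R :: b :: t>>%VS = <<b :: r>>%VS.
Proof.
move=> [hb0 hbr hr] hkz [_ hzt ht] hzt_r; set y := k *: b + z.
have hay : alpha y = alpha z by rewrite /y addrC vnormD_eq.
have htr : (<<t>> <= <<r>>)%VS by rewrite -hzt_r subv_span_cons.
split.
  split; last by split=> //; apply: aorthS hbr.
  - by apply/eqP => y0; apply: (olt_neqN hkz); rewrite -hay y0 vnorm0.
  move=> _ _ /vlineP [l ->] /memv_span_consP [m [w hw ->]].
  have -> : l *: y + (m *: b + w) = (l * k + m) *: b + (l *: z + w).
    by rewrite /y scalerDr scalerDl scalerA addrACA.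
  apply: ole_trans (aorth_ler hbr (memv_lineZ _ _) _) _.
    by apply: memvD (subvP htr _ hw); rewrite memvZ // -hzt_r memv_span_head.
  by rewrite vnormZ hay -vnormZ; apply: hzt; rewrite ?memv_lineZ.
rewrite !span_cons -hzt_r span_cons (addvA <[b]>%VS) (addvC <[b]>%VS <[z]>%VS).
rewrite -addvA -!span_cons.
apply: (span_cons_exchange (oner_neq0 F) (memv_span_cons _ _ _ _ (mem0v _))).
by rewrite scale1r addr0 addrC.
Qed.

Lemma aorth_seq_exchange {s y} : aorth_seq s -> y \in <<s>>%VS -> y != 0 ->
  exists t, [/\ aorth_seq (y :: t), <<y :: t>>%VS = <<s>>%VS & size t = (size s).-1].
Proof.
elim: s y => [|b r IH] y hs; first by rewrite span_nil memv0 => /eqP ->; rewrite eqxx.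
case/memv_span_consP=> k [z hz ->] hy0.
have [hkz | hzk] := ole_dec (alpha (k *: b)) (alpha z).
  by exists r; have [] := aorth_seq_exchange_head hs hz hkz hy0.
have z0 : z != 0 by apply/eqP => z0; apply: (olt_neqN hzk); rewrite z0 vnorm0.
have [_ _ hr] := hs; have [t [hzt hzt_r st]] := IH z hr hz z0.
exists (b :: t); have [] := aorth_seq_exchange_tail hs hzk hzt hzt_r.
split=> //; rewrite /= st prednK // lt0n size_eq0.
by apply: contraNneq z0 => r0; move: hz; rewrite r0 span_nil memv0.
Qed.

Lemma aorth_seq_map (f : {linear V -> V}) s :
  {in <<s>>%VS, forall u, alpha (f u) = alpha u} -> aorth_seq s -> aorth_seq (map f s).
Proof.
elim: s => [|b s IH] //= hiso [hb0 hbs hs].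
have hiso_b : alpha (f b) = alpha b by rewrite hiso ?memv_span_head.
split.
- by apply/eqP => fb0; apply: (vnorm_neqN hb0); rewrite -hiso_b fb0 vnorm0.
- move=> _ _ /vlineP [l ->] /memv_span_mapP [w hw ->].
  rewrite -linearZ -linearD !hiso ?memv_span_cons ?memvZ ?memv_span_head //.
  by apply: hbs; rewrite ?memv_lineZ.
- by apply: IH => // u hu; apply: hiso; apply: (subvP (subv_span_cons _ _)).
Qed.

Lemma aorth_free {x y} : x != 0 -> y != 0 -> aorth <[x]> <[y]> -> free [:: x; y].
Proof.
move=> hx0 hy0 hxy; rewrite free_cons span_seq1 seq1_free hy0 andbT.
apply/negP => /vlineP [k ek]; apply: (vnorm_neqN hx0).
have hky : - (k *: y) \in <[y]>%VS by rewrite memvN memv_lineZ.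
have := hxy x _ (memv_line x) hky; rewrite {1}ek subrr vnorm0.
by case: (alpha x).
Qed.

Lemma aorth_vnorm_on {x y} : x != 0 -> y != 0 -> aorth <[x]> <[y]> ->
  vnorm_on le v (pair_span (x, y)) alpha.
Proof.
move=> hx0 hy0 hxy; have hfree := aorth_free hx0 hy0 hxy.
have hdim : \dim (pair_span (x, y)) = 2%N by apply/eqP.
split=> [z _|l z _|z w _ _|]; [exact: vnorm_eq0|exact: vnormZ|exact: vnorm_ultra|].
rewrite hdim; exists [tuple x; y]; split; first by rewrite /basis_of /= eqxx.
move=> l; apply: vnorm_sum_ominI => i; rewrite !big_ord_recl big_ord0 addr0.
case: i => -[|[|//]] hi.
  rewrite (_ : Ordinal hi = ord0) /=; last exact: val_inj.
  by apply: hxy; rewrite ?memv_lineZ.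
rewrite (_ : Ordinal hi = lift ord0 ord0) /=; last exact: val_inj.
by apply: aorth_ler hxy _ _; rewrite ?memv_lineZ.
Qed.

Section Compatibility.
Context {q : V -> F} (hq : quadratic_form q) {eps : G}
  (hcomp : compatible_on le v fullv q alpha eps) (heps : olt le (Some eps) (v 2)).

Lemma eps_lt2 : Some eps <o v 2.
Proof. by case: heps => hle hneq /(ole_anti hle). Qed.

Lemma compat_polar x y : alpha x +o alpha y +o Some eps <=o v (polar q x y).
Proof. by case: hcomp => h _ _; apply: h; rewrite memvf. Qed.

Lemma compat_q x : alpha x +o alpha x <=o v (q x).
Proof. by case: hcomp => _ h _; apply: h; rewrite memvf. Qed.

Lemma compat_polarxx x : v 2 +o (alpha x +o alpha x) <=o v (polar q x x).
Proof. by rewrite polarxx // valM; apply/ole_oaddl/compat_q. Qed.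

Definition compat_pair x y :=
  [/\ x != 0, y != 0 & v (polar q x y) = alpha x +o alpha y +o Some eps].

Lemma compat_pairC {x y} : compat_pair x y -> compat_pair y x.
Proof. by case=> hx hy hxy; split=> //; rewrite polarC hxy (oaddC (alpha x)). Qed.

Lemma compat_pair_neqN {x y} : compat_pair x y -> alpha x +o alpha y <> None.
Proof. by case=> /vnorm_neqN hx /vnorm_neqN hy _; apply: oadd_neqN. Qed.

(* Since v 2 > eps, the diagonal term of the Gram determinant is negligible. *)
Lemma val_gram {x y} : compat_pair x y ->
  v (gram q x y) = v (polar q x y) +o v (polar q x y).
Proof.
move=> hxy; have hS := compat_pair_neqN hxy; case: hxy => _ _ hc.
set X := v (polar q x y).
have hXY : X <o v 2 +o (alpha x +o alpha y).
  by rewrite /X hc [_ +o Some eps]oaddC; apply: olt_oadd_le eps_lt2 (ole_refl _) hS.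
have hlt : v (polar q x y ^+ 2) <o v (polar q x x * polar q y y).
  rewrite expr2 !valM -/X.
  apply: olt_le_trans (olt_oadd_le hXY (olt_le hXY) (olt_neqN hXY)) _.
  apply: (ole_trans _ (ole_oadd (compat_polarxx x) (compat_polarxx y))).
  by rewrite (AC ((1*2)*(1*2)) ((1*(2*5))*(4*(3*6)))); apply: ole_refl.
by rewrite /gram addrC valD_eq; rewrite valN // expr2 valM.
Qed.

Lemma gram_neq0 {x y} : compat_pair x y -> gram q x y != 0.
Proof.
move=> hxy; apply/eqP => /val_eq0; rewrite (val_gram hxy).
have hS := compat_pair_neqN hxy; case: hxy => _ _ ->.
by apply: oadd_neqN; apply: oadd_neqN.
Qed.

(* Solving for a by Cramer's rule, [val_gram] turns the compatibility bounds into a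
   lower bound on v a. *)
Lemma vnorm_le_plane_coef {x y} : compat_pair x y -> forall z a b,
  polar q (z - (a *: x + b *: y)) x = 0 -> polar q (z - (a *: x + b *: y)) y = 0 ->
  alpha z <=o alpha (a *: x).
Proof.
move=> hxy z a b hzx hzy.
have ezx : polar q z x = a * polar q x x + b * polar q x y.
  by move/eqP: hzx; rewrite polarBl // polarDl // !polarZl // (polarC y x) subr_eq0 => /eqP.
have ezy : polar q z y = a * polar q x y + b * polar q y y.
  by move/eqP: hzy; rewrite polarBl // polarDl // !polarZl // subr_eq0 => /eqP.
have ea : a * gram q x y = polar q y y * polar q z x - polar q x y * polar q z y.
  by rewrite /gram ezx ezy; ring.
have hD := val_neqN (gram_neq0 hxy).
rewrite vnormZ -(ole_oadd2r hD).
have -> : v a +o alpha x +o v (gram q x y) = alpha x +o v (a * gram q x y).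
  by rewrite valM (AC (2*1) (2*(1*3))).
rewrite ea; apply: (ole_trans _ (ole_oaddl (val_ultra _ _))); rewrite valN.
have hc := hxy; case: hc => _ _ hc; rewrite (val_gram hxy) !valM.
apply: ole_oadd_min.
  apply: (ole_trans _ (ole_oaddl (ole_oadd (ole_trans (ole_oaddr (olt_le eps_lt2))
                                     (compat_polarxx y)) (compat_polar z x)))).
  by rewrite hc (AC (1*(3*3)) (2*((4*(3*6))*((1*5)*7)))); apply: ole_refl.
apply: (ole_trans _ (ole_oaddl (ole_oaddl (compat_polar z y)))).
by rewrite {2}hc (AC (1*(1*3)) (3*(2*((1*4)*5)))); apply: ole_refl.
Qed.

Lemma vnorm_le_plane {x y z w} : compat_pair x y -> w \in pair_span (x, y) ->
  polar q (z - w) x = 0 -> polar q (z - w) y = 0 -> alpha z <=o alpha w.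
Proof.
move=> hxy /pair_spanP [a [b ->]] hzx hzy; apply: (ultraD_ge vnorm_ultra).
  exact: vnorm_le_plane_coef hxy z a b hzx hzy.
by have := vnorm_le_plane_coef (compat_pairC hxy) z b a; rewrite [b *: y + _]addrC; apply.
Qed.

Lemma vnorm_le_polar {x y z} : x != 0 ->
  v (polar q x z) = alpha x +o alpha y +o Some eps -> alpha z <=o alpha y.
Proof.
move=> /vnorm_neqN hx hxz; have := compat_polar x z; rewrite hxz.
have hS : Some eps <> None by [].
by move/(ole_oadd2r hS)/(ole_oadd2l hx).
Qed.

Definition has_partners (U : {vspace V}) :=
  forall z, z \in U -> z != 0 -> exists2 y, y \in U & compat_pair z y.

(* Removing from a partner of x its component along x keeps it a partner,
   because that component is too small to matter (v 2 > eps). *)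
Lemma compat_pair_shift {x s y} : aorth <[x]> <<s>> -> compat_pair x y ->
  y \in <<x :: s>>%VS -> exists2 y1, y1 \in <<s>>%VS & compat_pair x y1.
Proof.
move=> hxs hxy /memv_span_consP [k [y1 hy1 ey]]; exists y1 => //.
have hS := compat_pair_neqN hxy; case: hxy => hx0 hy0 hxy.
have hle : alpha y <=o alpha (k *: x) by rewrite ey; apply: hxs; rewrite ?memv_lineZ.
have hpol : v (polar q x y1) = v (polar q x y).
  have -> : polar q x y1 = polar q x y + - (k * polar q x x).
    by rewrite ey polarDr // polarZr // addrAC subrr add0r.
  apply: valD_eq; rewrite valN hxy [_ +o Some eps]oaddC.
  apply: olt_le_trans (olt_oadd_le eps_lt2 (ole_oaddl hle) hS) _.
  rewrite valM; apply: (ole_trans _ (ole_oaddl (compat_polarxx x))).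
  by rewrite vnormZ (AC (1*(1*2)) (3*(1*(2*4)))); apply: ole_refl.
have hay1 : alpha y1 = alpha y.
  apply: ole_anti; first by apply: vnorm_le_polar hx0 _; rewrite hpol.
  by rewrite ey; apply: aorth_ler hxs _ hy1; rewrite memv_lineZ.
split=> //; last by rewrite hpol hxy hay1.
by apply/eqP => y10; apply: (vnorm_neqN hy0); rewrite -hay1 y10 vnorm0.
Qed.

Section PlaneProjection.
Context {x y : V} {t : seq V}.
Hypotheses (hxy : compat_pair x y) (hxyt : aorth_seq [:: x, y & t]).

Local Notation P := (orth_proj q x y).
Local Notation W := (pair_span (x, y)).

HB.instance Definition _ := GRing.isLinear.Build F V V *:%R P (orth_proj_linear hq x y).

Lemma polar_orth_proj_plane u a : a \in W -> polar q (P u) a = 0.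
Proof.
have hD := gram_neq0 hxy.
case/pair_spanP=> k1 [k2 ->]; rewrite polarDr // !polarZr //.
by rewrite orth_proj_orthl // orth_proj_orthr // !mulr0 addr0.
Qed.

Lemma plane_sub_orth_proj u : u - P u \in W.
Proof. by rewrite /orth_proj subKr memv_pair_span. Qed.

Lemma vnorm_le_plane_part u : alpha u <=o alpha (u - P u).
Proof.
apply: vnorm_le_plane hxy (plane_sub_orth_proj u) _ _; rewrite subKr;
  by apply: polar_orth_proj_plane; rewrite ?memv_pair_spanl ?memv_pair_spanr.
Qed.

Lemma span_plane_cons : <<[:: x, y & t]>>%VS = (W + <<t>>)%VS.
Proof. exact: (span_cat [:: x; y] t). Qed.

Lemma vnorm_plane_addl a w : a \in W -> w \in <<t>>%VS -> alpha (a + w) <=o alpha w.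
Proof.
case: hxyt => _ hxt [_ hyt _] /pair_spanP [k1 [k2 ->]] hw; rewrite -addrA.
apply: ole_trans (aorth_ler hxt (memv_lineZ _ _) (memv_span_cons _ _ _ _ hw)) _.
exact: aorth_ler hyt (memv_lineZ _ _) hw.
Qed.

Lemma vnorm_orth_proj u : u \in <<t>>%VS -> alpha (P u) = alpha u.
Proof.
move=> hu; apply: ole_anti.
  have -> : P u = - (u - P u) + u by rewrite opprB subrK.
  by apply: vnorm_plane_addl; rewrite ?memvN ?plane_sub_orth_proj.
have -> : P u = u - (u - P u) by rewrite subKr.
by apply: (ultraD_ge vnorm_ultra (ole_refl _)); rewrite vnormN; apply: vnorm_le_plane_part.
Qed.

Lemma aorth_seq_orth_proj : aorth_seq (map P t).
Proof. by apply: aorth_seq_map vnorm_orth_proj _; case: hxyt => _ _ []. Qed.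

Lemma span_orth_proj : (W + <<map P t>>)%VS = <<[:: x, y & t]>>%VS.
Proof.
rewrite span_plane_cons; apply/eqP; rewrite eqEsubv !subv_add !addvSl /=.
apply/andP; split; apply/span_subvP.
  move=> _ /mapP [u hu ->]; have -> : P u = - (u - P u) + u by rewrite opprB subrK.
  by rewrite memv_add ?memvN ?plane_sub_orth_proj ?memv_span.
move=> u hu; rewrite -(subrK (P u) u).
by rewrite memv_add ?plane_sub_orth_proj ?memv_span ?map_f.
Qed.

Lemma polar_plane_orth_proj {a b} : a \in W -> b \in <<map P t>>%VS -> polar q a b = 0.
Proof. by move=> ha /memv_span_mapP [u _ ->]; rewrite polarC polar_orth_proj_plane. Qed.

Lemma aorth_plane_orth_proj : aorth W <<map P t>>%VS.
Proof.
move=> a b ha hb; apply: vnorm_le_plane hxy ha _ _; rewrite addrC addKr polarC;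
  by apply: polar_plane_orth_proj hb; rewrite ?memv_pair_spanl ?memv_pair_spanr.
Qed.

Lemma has_partners_orth_proj :
  has_partners <<[:: x, y & t]>>%VS -> has_partners <<map P t>>%VS.
Proof.
move=> hpart z hz hz0; have hzU := subvP (addvSr W _) z hz; rewrite span_orth_proj in hzU.
have [y' hy' [_ hy'0 hzy']] := hpart z hzU hz0.
move: hy'; rewrite span_plane_cons => /memv_addP [a ha [w hw ey']].
have hza b : b \in W -> polar q z b = 0.
  by move=> hb; rewrite polarC (polar_plane_orth_proj hb hz).
have hpol : polar q z (P w) = polar q z y'.
  rewrite ey' [polar q z (a + w)]polarDr // (hza a ha) add0r.
  by rewrite /orth_proj polarBr // (hza _ (memv_pair_span _ _ _ _)) subr0.
have hPw : alpha (P w) = alpha y'.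
  apply: ole_anti; first by apply: vnorm_le_polar hz0 _; rewrite hpol.
  by rewrite vnorm_orth_proj // ey'; apply: vnorm_plane_addl.
exists (P w); first by apply/memv_span_mapP; exists w.
split=> //; last by rewrite hpol hzy' hPw.
by apply/eqP => Pw0; apply: (vnorm_neqN hy'0); rewrite -hPw Pw0 vnorm0.
Qed.

End PlaneProjection.

Lemma compat_pair_dominant {x y a b} : compat_pair x y ->
  alpha (a *: x) <=o alpha (b *: y) -> alpha (a *: x + b *: y) = alpha (a *: x) ->
  a *: x + b *: y != 0 ->
  v (polar q (a *: x + b *: y) y) = alpha (a *: x + b *: y) +o alpha y +o Some eps.
Proof.
move=> hxy hab hE hz0; have hS := compat_pair_neqN hxy; case: hxy => hx0 /vnorm_neqN hy hc.
have hax : alpha (a *: x) <> None by rewrite -hE; apply: vnorm_neqN.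
have hac : v (a * polar q x y) = alpha (a *: x) +o alpha y +o Some eps.
  by rewrite valM hc vnormZ !oaddA.
rewrite hE polarDl // !polarZl // valD_eq hac //.
rewrite [_ +o Some eps]oaddC valM.
apply: olt_le_trans (olt_oadd_le eps_lt2 (ole_oaddr hab) (oadd_neqN hax hy)) _.
apply: (ole_trans _ (ole_oaddl (compat_polarxx y))).
by rewrite vnormZ (AC (1*(2*1)) (2*(1*(3*4)))); apply: ole_refl.
Qed.

Lemma compatible_on_pair_span {x y} : compat_pair x y -> aorth <[x]> <[y]> ->
  compatible_on le v (pair_span (x, y)) q alpha eps.
Proof.
move=> hxy hxy_orth; split=> [z w _ _|z _|]; [exact: compat_polar|exact: compat_q|].
have [hx0 hy0 _] := hxy.
move=> _ /pair_spanP [a [b ->]] hz0.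
have [hab|hba] := ole_dec (alpha (a *: x)) (alpha (b *: y)).
  exists y; rewrite ?memv_pair_spanr //; split=> //.
  apply: compat_pair_dominant => //.
  by apply: aorth_eq hxy_orth _ _ hab; rewrite memv_lineZ.
exists x; rewrite ?memv_pair_spanl //; split=> //.
rewrite addrC in hz0 *; apply: compat_pair_dominant (compat_pairC hxy) (olt_le hba) _ hz0.
exact: vnormD_eq.
Qed.

Fixpoint orth_pairs (ps : seq (V * V)) : Prop :=
  if ps is p :: ps' then
    [/\ compat_pair p.1 p.2, aorth <[p.1]> <[p.2]>, aorth (pair_span p) (span_pairs ps'),
        {in pair_span p & span_pairs ps', forall a b, polar q a b = 0} & orth_pairs ps']
  else True.

Lemma orth_pairs_exist {n s} : (size s <= n)%N -> aorth_seq s -> has_partners <<s>>%VS ->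
  exists ps, orth_pairs ps /\ span_pairs ps = <<s>>%VS.
Proof.
elim: n s => [|n IH] [|x s] //= hn;
  try by exists [::]; rewrite /span_pairs big_ord0 span_nil.
case=> hx0 hxs hs hpart.
have [y hyU hxy] := hpart x (memv_span_head _ _) hx0.
have [y1 hy1 hxy1] := compat_pair_shift hxs hxy hyU.
have [_ hy10 _] := hxy1.
have [t [hy1t ey1t st]] := aorth_seq_exchange hs hy1 hy10.
have ext : <<[:: x, y1 & t]>>%VS = <<x :: s>>%VS by rewrite !(span_cons x) ey1t.
have hxy1t : aorth_seq [:: x, y1 & t] by split=> //; rewrite ey1t.
have hpart' : has_partners <<[:: x, y1 & t]>>%VS by rewrite ext.
have [|ps [hps ehps]] := IH _ _ (aorth_seq_orth_proj hxy1 hxy1t)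
  (has_partners_orth_proj hxy1 hxy1t hpart').
  by rewrite size_map st (leq_trans (leq_pred _)) // -ltnS.
exists ((x, y1) :: ps); split; last by rewrite span_pairs_cons ehps span_orth_proj.
split=> //=; rewrite ?ehps.
- by apply: aorthS hxs; rewrite ?subvv // -ey1t -memvE memv_span_head.
- exact: aorth_plane_orth_proj.
- by move=> a b; apply: polar_plane_orth_proj.
Qed.

Lemma orth_pair_decomposition : exists ps, orth_pairs ps /\ span_pairs ps = fullv.
Proof.
have [s [hs hspan]] := exists_aorth_basis.
have hpart : has_partners <<s>>%VS.
  move=> z _ hz0; case: hcomp => _ _ /(_ z (memvf z) hz0) [y _ [hy0 hzy]].
  by exists y; rewrite ?hspan ?memvf.
have [ps [hps hps_span]] := orth_pairs_exist (leqnn (size s)) hs hpart.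
by exists ps; rewrite hps_span hspan.
Qed.

Lemma orth_pairs_nth {ps i} : orth_pairs ps -> (i < size ps)%N ->
  compat_pair (nth (0%R, 0%R) ps i).1 (nth (0%R, 0%R) ps i).2 /\
  aorth <[(nth (0%R, 0%R) ps i).1]> <[(nth (0%R, 0%R) ps i).2]>.
Proof.
elim: ps i => [|p ps IH] [|i] //=; first by case.
by case=> _ _ _ _ hps hi; apply: IH.
Qed.

Lemma orth_pairs_polar {ps i j a b} : orth_pairs ps ->
  (i < size ps)%N -> (j < size ps)%N -> i != j ->
  a \in pair_span (nth (0%R, 0%R) ps i) -> b \in pair_span (nth (0%R, 0%R) ps j) ->
  polar q a b = 0.
Proof.
elim: ps i j => [|p ps IH] [|i] [|j] //= [_ _ _ horth hps];
  rewrite ?ltnS => hi hj hij ha hb.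
- by apply: horth ha _; apply: (subvP (pair_span_sub_pairs hj)).
- by rewrite polarC; apply: horth hb _; apply: (subvP (pair_span_sub_pairs hi)).
- exact: IH hps hi hj hij ha hb.
Qed.

Lemma orth_pairs_vnorm_sum {ps} : orth_pairs ps -> forall x : 'I_(size ps) -> V,
  (forall i, x i \in pair_span (nth (0%R, 0%R) ps i)) ->
  forall j, alpha (\sum_i x i) <=o alpha (x j).
Proof.
elim: ps => [|p ps IH]; first by move=> _ x hx [].
case=> _ _ hps _ hps' x hx j; rewrite big_ord_recl.
have hR : \sum_(i < size ps) x (lift ord0 i) \in span_pairs ps.
  by apply: memv_sumr => i _; apply: hx (lift ord0 i).
case: (unliftP ord0 j) => [j' ->|->]; last exact: hps (hx ord0) hR.
apply: ole_trans (aorth_ler hps (hx ord0) hR) _.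
exact: IH hps' (fun i => x (lift ord0 i)) (fun i => hx (lift ord0 i)) j'.
Qed.

Lemma pair_span_dim {x y} : compat_pair x y -> aorth <[x]> <[y]> ->
  \dim (pair_span (x, y)) = 2%N.
Proof. by case=> hx hy _ hxy; apply/eqP; apply: aorth_free hx hy hxy. Qed.

End Compatibility.

End Norm.
End Valuation.
End ValuedSpaces.

Theorem proposition4p5
  (G : zmodType) (le : rel G) (hG : divisible_ordered_group le)
  (F : fieldType) (v : F -> option G) (hv : valuation le v)
  (V : vectType F) (q : V -> F) (hq : quadratic_form q)
  (alpha : V -> option G) (eps : G)
  (halpha : vnorm_on le v fullv alpha)
  (hcomp : compatible_on le v fullv q alpha eps)
  (heps0 : le 0 eps) (heps2 : olt le (Some eps) (v 2)) :
  exists (n : nat) (Vs : 'I_n -> {vspace V}),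
    (forall i, \dim (Vs i) = 2%N) /\
    (\sum_(i < n) Vs i)%VS = fullv /\
    directv (\sum_(i < n) Vs i)%VS /\
    (forall i j x y, i != j -> x \in Vs i -> y \in Vs j -> polar q x y = 0) /\
    (forall i, vnorm_on le v (Vs i) alpha /\
               compatible_on le v (Vs i) q alpha eps) /\
    (forall x : 'I_n -> V, (forall i, x i \in Vs i) ->
       alpha (\sum_(i < n) x i) = ominI le (fun i => alpha (x i))).
Proof.
have [ps [hps hspan]] := orth_pair_decomposition hG hv halpha hq hcomp heps2.
have hpair (i : 'I_(size ps)) := orth_pairs_nth hps (ltn_ord i).
have hmin := orth_pairs_vnorm_sum hG hv halpha hps.
exists (size ps), (fun i => pair_span (nth (0%R, 0%R) ps i)).
split; [|split; [exact: hspan|split; [|split; [|split]]]].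
- move=> i; move: (hpair i); case: (nth _ ps i) => x y /= [hxy hxy_orth].
  exact: (pair_span_dim halpha hxy hxy_orth).
- apply/directv_sum_independent => us hus hsum0 i _; apply/(vnorm_eq0 halpha).
  by have := hmin us (fun j => hus j isT) i; rewrite hsum0 (vnorm0 halpha); case: (alpha _).
- by move=> i j a b hij; apply: orth_pairs_polar hps (ltn_ord i) (ltn_ord j) hij.
- move=> i; move: (hpair i); case: (nth _ ps i) => x y /= [hxy hxy_orth].
  have [hx0 hy0 _] := hxy; split.
    exact: (aorth_vnorm_on hG hv halpha hx0 hy0 hxy_orth).
  exact: (compatible_on_pair_span hG hv halpha hq hcomp heps2 hxy hxy_orth).
- by move=> x hx; apply: (vnorm_sum_ominI hG halpha) => j; apply: hmin.
Qed.
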